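(* Let $\xi=e^{i\pi/5}$, $\tau=\frac{1+\sqrt5}{2}$. For $n\in\mathbb{N}_0$ let $Q_2(n)=\{\sum_{j=0}^9 n_j\xi^j: n_j\in\mathbb{N}_0,\ \sum_j n_j\le n\}$ and $L(n)=Q_2(n)\cap\mathbb{R}$. Then $$L(n)=\{(a+c)+(b-c)\tau \mid a,b,c\in\mathbb{Z},\ |a|+2|b|+2|c|\le n\}.$$
   Context: $L(n)$ is denoted $L_{\alpha_1}(n)$ in the paper. *)

From Stdlib Require Import Reals ZArith List.
From Coquelicot Require Import Coquelicot.
Open Scope R_scope.

Definition xi : C := (cos (PI / 5), sin (PI / 5)).

Definition tau : R := (1 + sqrt 5) / 2.

Definition sum10 {A} (plus : A -> A -> A) (zero : A) (f : nat -> A) : A :=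
  fold_right (fun j acc => plus (f j) acc) zero (seq 0 10).

Definition Q2 (n : nat) (z : C) : Prop :=
  exists m : nat -> nat,
    (sum10 Nat.add 0%nat m <= n)%nat /\
    z = sum10 Cplus (RtoC 0) (fun j => Cmult (RtoC (INR (m j))) (Cpow xi j)).

Definition L (n : nat) (x : R) : Prop := Q2 n (RtoC x).

(* Writing [s = sin (pi/5)], the powers of [xi] have real parts in [{±1, ±tau/2, ±(tau-1)/2}]
   and imaginary parts in [s Z[tau]], and [xi^(j+5) = - xi^j]. The imaginary part of an
   element of [Q_2(n)] is [s ((k1 + k4) + (k2 + k3) tau)] with [kj = n_j - n_(j+5)]; as [1]
   and [tau] are linearly independent over [Q] (irrationality of [sqrt 5]), a real element
   has [k4 = -k1] and [k3 = -k2], and its real part is then [(k0 - k2) + (k1 + k2) tau]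
   at cost at least [|k0| + 2|k1| + 2|k2|]. Conversely [a + b (xi - xi^4) + c (xi^3 - xi^2)]
   realises [(a + c) + (b - c) tau] at cost [|a| + 2|b| + 2|c|]. *)

From Stdlib Require Import Reals ZArith Znumtheory List Lra Lia Psatz.
From Coquelicot Require Import Coquelicot.
Open Scope R_scope.

Lemma prime_5 : prime 5.
Proof.
  apply prime_intro; [lia|].
  intros k Hk; apply Zgcd_1_rel_prime.
  assert (Hk' : (k = 1 \/ k = 2 \/ k = 3 \/ k = 4)%Z) by lia.
  now destruct Hk' as [E|[E|[E|E]]]; subst k.
Qed.

Lemma sqr_eq_prime_mul_sqr (p m q : Z) :
  prime p -> (m * m = p * (q * q))%Z -> q = 0%Z.
Proof.
  intros Hp. pose proof (prime_ge_2 p Hp) as Hp2.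
  revert m. induction q as [q IH] using (well_founded_induction (Wf_nat.well_founded_ltof Z Z.abs_nat)).
  intros m E.
  (* Descent: [p] divides [m], then [q], and [(q/p, m/p)] is a smaller solution. *)
  destruct (Z.eq_dec q 0) as [|Hq]; [assumption|exfalso].
  assert (Hm : (p | m)).
  { assert (Hpm : (p | m * m)) by (exists (q * q)%Z; lia).
    now destruct (prime_mult p Hp m m Hpm). }
  destruct Hm as [t ->].
  assert (Et : (q * q = p * (t * t))%Z) by nia.
  assert (Hq' : (p | q)).
  { assert (Hpq : (p | q * q)) by (exists (t * t)%Z; lia).
    now destruct (prime_mult p Hp q q Hpq). }
  destruct Hq' as [u ->].
  assert (Eu : (t * t = p * (u * u))%Z) by nia.
  apply Hq. enough (u = 0%Z) by (subst; lia).
  refine (IH u _ t Eu). unfold Wf_nat.ltof. nia.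
Qed.

Lemma tau_sqr : tau * tau = tau + 1.
Proof. unfold tau. pose proof (sqrt_sqrt 5 ltac:(lra)). nra. Qed.

Lemma IZR_lin_tau_eq0 (p q : Z) : IZR p + IZR q * tau = 0 -> p = 0%Z /\ q = 0%Z.
Proof.
  intros E. unfold tau in E.
  assert (Hq : q = 0%Z).
  { apply (sqr_eq_prime_mul_sqr 5 (2 * p + q) q prime_5), eq_IZR.
    assert (Hs : IZR (2 * p + q) = - (IZR q * sqrt 5)).
    { rewrite plus_IZR, mult_IZR. lra. }
    rewrite !mult_IZR, Hs. pose proof (sqrt_sqrt 5 ltac:(lra)). nra. }
  subst q. split; [|reflexivity]. apply eq_IZR. lra.
Qed.

Lemma cos_PI5 : cos (PI / 5) = tau / 2.
Proof.
  set (t := PI / 5).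
  assert (Ht : cos (2 * t + t) = - cos (2 * t)).
  { replace (2 * t + t) with (PI - 2 * t) by (unfold t; field).
    apply Rtrigo_facts.cos_pi_minus. }
  rewrite cos_plus, sin_2a, !cos_2a_cos in Ht.
  pose proof (sin2 t) as Hs. unfold Rsqr in Hs.
  assert (Hc : 0 < cos t) by (apply cos_gt_0; unfold t; pose proof PI_RGT_0; lra).
  (* [cos (3t) = - cos (2t)] factors as [(c + 1)(4c^2 - 2c - 1) = 0]. *)
  assert (Hq : 4 * cos t * cos t - 2 * cos t - 1 = 0).
  { assert (E : (cos t + 1) * (4 * cos t * cos t - 2 * cos t - 1) = 0) by nra.
    apply Rmult_integral in E. destruct E; lra. }
  pose proof (sqrt_sqrt 5 ltac:(lra)). pose proof (sqrt_lt_R0 5 ltac:(lra)).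
  assert (E : (cos t - (1 + sqrt 5) / 4) * (cos t - (1 - sqrt 5) / 4) = 0) by nra.
  unfold tau. apply Rmult_integral in E. destruct E as [E|E]; nra.
Qed.

Local Notation s := (sin (PI / 5)).

Lemma sin_PI5_sqr : s * s = 1 - tau * tau / 4.
Proof. pose proof (sin2 (PI / 5)) as H. unfold Rsqr in H. rewrite H, cos_PI5. field. Qed.

Lemma xi_pow_S (j : nat) (x y x' y' : R) :
  Cpow xi j = (x, y) ->
  tau / 2 * x - s * y = x' -> tau / 2 * y + s * x = y' ->
  Cpow xi (S j) = (x', y').
Proof.
  intros Hj Hx Hy. rewrite Cpow_S, Hj. unfold xi, Cmult. rewrite cos_PI5. simpl.
  rewrite <- Hx, <- Hy. f_equal; ring.
Qed.

Lemma xi_pow_table :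
  Cpow xi 0 = (1, 0) /\
  Cpow xi 1 = (tau / 2, s) /\
  Cpow xi 2 = ((tau - 1) / 2, tau * s) /\
  Cpow xi 3 = (- ((tau - 1) / 2), tau * s) /\
  Cpow xi 4 = (- (tau / 2), s) /\
  Cpow xi 5 = (-1, 0) /\
  Cpow xi 6 = (- (tau / 2), - s) /\
  Cpow xi 7 = (- ((tau - 1) / 2), - (tau * s)) /\
  Cpow xi 8 = ((tau - 1) / 2, - (tau * s)) /\
  Cpow xi 9 = (tau / 2, - s).
Proof.
  pose proof tau_sqr as T2. pose proof sin_PI5_sqr as S2.
  assert (T3 : tau * tau * tau = 2 * tau + 1) by nra.
  assert (TS : s * (tau * s) = tau * (1 - tau * tau / 4)) by (rewrite <- S2; ring).
  assert (P0 : Cpow xi 0 = (1, 0)) by reflexivity.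
  assert (P1 : Cpow xi 1 = (tau / 2, s)) by (apply (xi_pow_S _ _ _ _ _ P0); ring).
  assert (P2 : Cpow xi 2 = ((tau - 1) / 2, tau * s)) by (apply (xi_pow_S _ _ _ _ _ P1); nra).
  assert (P3 : Cpow xi 3 = (- ((tau - 1) / 2), tau * s)) by (apply (xi_pow_S _ _ _ _ _ P2); nra).
  assert (P4 : Cpow xi 4 = (- (tau / 2), s)) by (apply (xi_pow_S _ _ _ _ _ P3); nra).
  assert (P5 : Cpow xi 5 = (-1, 0)) by (apply (xi_pow_S _ _ _ _ _ P4); nra).
  assert (P6 : Cpow xi 6 = (- (tau / 2), - s)) by (apply (xi_pow_S _ _ _ _ _ P5); nra).
  assert (P7 : Cpow xi 7 = (- ((tau - 1) / 2), - (tau * s))) by (apply (xi_pow_S _ _ _ _ _ P6); nra).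
  assert (P8 : Cpow xi 8 = ((tau - 1) / 2, - (tau * s))) by (apply (xi_pow_S _ _ _ _ _ P7); nra).
  assert (P9 : Cpow xi 9 = (tau / 2, - s)) by (apply (xi_pow_S _ _ _ _ _ P8); nra).
  tauto.
Qed.

(* Since [xi^(j+5) = - xi^j], a combination of the ten powers only depends on these five
   differences. *)
Definition net_coeff (m : nat -> nat) (j : nat) : Z :=
  (Z.of_nat (m j) - Z.of_nat (m (j + 5)%nat))%Z.

Lemma net_coeff_size (m : nat -> nat) :
  (Z.abs (net_coeff m 0) + Z.abs (net_coeff m 1) + Z.abs (net_coeff m 2)
     + Z.abs (net_coeff m 3) + Z.abs (net_coeff m 4) <= Z.of_nat (sum10 Nat.add 0%nat m))%Z.
Proof. unfold net_coeff, sum10. cbn [seq fold_right Nat.add]. lia. Qed.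

Lemma xi_sum_eq (m : nat -> nat) :
  sum10 Cplus (RtoC 0) (fun j => Cmult (RtoC (INR (m j))) (Cpow xi j)) =
  (IZR (net_coeff m 0) + IZR (net_coeff m 1 - net_coeff m 4) * (tau / 2)
     + IZR (net_coeff m 2 - net_coeff m 3) * ((tau - 1) / 2),
   s * (IZR (net_coeff m 1 + net_coeff m 4) + IZR (net_coeff m 2 + net_coeff m 3) * tau)).
Proof.
  destruct xi_pow_table as (P0 & P1 & P2 & P3 & P4 & P5 & P6 & P7 & P8 & P9).
  unfold sum10, net_coeff. cbn [seq fold_right Nat.add].
  rewrite P0, P1, P2, P3, P4, P5, P6, P7, P8, P9.
  rewrite !plus_IZR, !minus_IZR, <- !INR_IZR_INZ.
  unfold Cplus, Cmult, RtoC. simpl. f_equal; field.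
Qed.

(* [a + b (xi - xi^4) + c (xi^3 - xi^2)], each negative coefficient being moved to the
   opposite power [xi^(j+5) = - xi^j]. *)
Definition xi_coeffs (a b c : Z) (j : nat) : nat :=
  match j with
  | 0 => Z.to_nat a | 5 => Z.to_nat (- a)
  | 1 => Z.to_nat b | 6 => Z.to_nat (- b)
  | 9 => Z.to_nat b | 4 => Z.to_nat (- b)
  | 3 => Z.to_nat c | 8 => Z.to_nat (- c)
  | 7 => Z.to_nat c | 2 => Z.to_nat (- c)
  | _ => 0
  end%nat.

Lemma xi_coeffs_size (a b c : Z) :
  Z.of_nat (sum10 Nat.add 0%nat (xi_coeffs a b c)) = (Z.abs a + 2 * Z.abs b + 2 * Z.abs c)%Z.
Proof. unfold sum10. cbn [seq fold_right xi_coeffs]. lia. Qed.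

Lemma net_coeff_xi_coeffs (a b c : Z) :
  net_coeff (xi_coeffs a b c) 0 = a /\ net_coeff (xi_coeffs a b c) 1 = b /\
  net_coeff (xi_coeffs a b c) 2 = (- c)%Z /\ net_coeff (xi_coeffs a b c) 3 = c /\
  net_coeff (xi_coeffs a b c) 4 = (- b)%Z.
Proof. unfold net_coeff. cbn [xi_coeffs Nat.add]. lia. Qed.

Theorem corollary6p7 : forall (n : nat) (x : R),
  L n x <->
  exists a b c : Z,
    (Z.abs a + 2 * Z.abs b + 2 * Z.abs c <= Z.of_nat n)%Z /\
    x = IZR (a + c) + IZR (b - c) * tau.
Proof.
  intros n x. unfold L, Q2. split.
  - intros (m & Hm & E). rewrite xi_sum_eq in E. unfold RtoC in E.
    injection E as Ere Eim. pose proof (net_coeff_size m) as Hk_size.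
    set (k := net_coeff m) in *.
    assert (Hs : 0 < s) by (apply sin_gt_0; pose proof PI_RGT_0; lra).
    assert (Hk : (k 1%nat + k 4%nat = 0 /\ k 2%nat + k 3%nat = 0)%Z).
    { apply IZR_lin_tau_eq0, (Rmult_eq_reg_l s); lra. }
    exists (k 0%nat), (k 1%nat), (- k 2%nat)%Z. split.
    + lia.
    + rewrite Ere. replace (k 4%nat) with (- k 1%nat)%Z by lia.
      replace (k 3%nat) with (- k 2%nat)%Z by lia.
      rewrite !plus_IZR, !minus_IZR, !opp_IZR. field.
  - intros (a & b & c & Hn & ->). exists (xi_coeffs a b c). split.
    + rewrite <- xi_coeffs_size in Hn. lia.
    + destruct (net_coeff_xi_coeffs a b c) as (K0 & K1 & K2 & K3 & K4).
      rewrite xi_sum_eq, K0, K1, K2, K3, K4. unfold RtoC.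
      f_equal; rewrite ?plus_IZR, ?minus_IZR, ?opp_IZR; field.
Qed.
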